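(* Let $t\in\mathbb{R}$, $\mu>0$, $\sigma>0$, $\lambda>0$ with $\lambda\ge(\mu-t)_-$. Let $\mathcal{L}_{\lambda}(\mu,\sigma)$ be the set of probability distributions $F$ on $\mathbb{R}$ with $\mathbb{E}^F[X]=\mu$, $\mathbb{E}^F[X^2]=\mu^2+\sigma^2$ and $\mathbb{E}^F[(X-t)_-]\le\lambda$ (for $X\sim F$), and let $\mathcal{L}^+_{\lambda}(\mu,\sigma)=\{F\in\mathcal{L}_{\lambda}(\mu,\sigma): F(0-)=0\}$. If either $\lambda>(\mu-t)_-$, or $\lambda=(\mu-t)_-$ and $\sigma^2\le\mu(t-\mu)$, then \[ \sup_{F \in \mathcal{L}^+_{\lambda}(\mu, \sigma)} \mathbb{E}^{F}[(X-t)_{+}^2] = \sup_{F \in \mathcal{L}_{\lambda}(\mu, \sigma)} \mathbb{E}^{F}[(X-t)_{+}^2] = \begin{cases} \sigma^2 + (\mu-t)_+^2, & \lambda > (\mu-t)_-, \\ 0, & \lambda=(\mu-t)_-,~\sigma^2 \le \mu (t-\mu). \end{cases} \]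
   Context: For $x\in\mathbb{R}$, $(x)_+=\max\{x,0\}$ and $(x)_-=\max\{-x,0\}$. $F(0-)=\mathbb{P}(X<0)$ under $F$, so $F(0-)=0$ means $F$ is the distribution of a non-negative random variable. $\mathbb{E}^F$ denotes expectation when $X$ has distribution $F$. *)

(* distributions on R are probability measures
   on the Borel sigma-algebra of R : realType. *)
From HB Require Import structures.
From mathcomp Require Import all_boot all_order all_algebra.
From mathcomp Require Import all_classical all_reals all_analysis.
Set Implicit Arguments. Unset Strict Implicit. Unset Printing Implicit Defensive.
Import Order.TTheory GRing.Theory Num.Theory.
Local Open Scope classical_set_scope.
Local Open Scope ring_scope.

Definition pos_part {R : realType} (x : R) : R := Num.max x 0.
Definition neg_part {R : realType} (x : R) : R := Num.max (- x) 0.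

Definition Lset {R : realType} (t mu sigma lambda : R) : set (probability R R) :=
  [set F : probability R R |
     F.-integrable setT (fun x : R => x%:E) /\
     (\int[F]_x (x%:E) = mu%:E)%E /\
     (\int[F]_x ((x ^+ 2)%:E) = (mu ^+ 2 + sigma ^+ 2)%:E)%E /\
     (\int[F]_x ((neg_part (x - t))%:E) <= lambda%:E)%E].

(* L^+_lambda(mu,sigma): additionally F(0-) = P(X < 0) = 0. *)
Definition Lset_pos {R : realType} (t mu sigma lambda : R) : set (probability R R) :=
  [set F | Lset t mu sigma lambda F /\ F [set x : R | x < 0] = 0%E].

Definition stop_loss2 {R : realType} (t : R) (F : probability R R) : \bar R :=
  (\int[F]_x (((pos_part (x - t)) ^+ 2)%:E))%E.

From HB Require Import structures.
From mathcomp Require Import all_boot all_order all_algebra.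
From mathcomp Require Import all_classical all_reals all_analysis measurable_realfun.
From mathcomp Require Import ring lra.
Import Order.TTheory GRing.Theory Num.Theory.
Local Open Scope classical_set_scope.
Local Open Scope ring_scope.

(* Upper bound: for m = min(mu, t) <= t one has (x - t)_+^2 <= (x - m)^2, whose
   expectation is sigma^2 + (mu - m)^2 = sigma^2 + (mu - t)_+^2.  When
   lambda = (mu - t)_- > 0, E(X - t)_+ = mu - t + E(X - t)_- <= 0, so (X - t)_+
   vanishes almost surely.
   Lower bound: the law with mass s^2/(1 + s^2) at mu + sigma/s and 1/(1 + s^2)
   at mu - sigma s has mean mu and variance sigma^2, and is nonnegative when
   sigma s <= mu.  As s -> 0+ it meets the constraint on E(X - t)_- whenever
   lambda > (mu - t)_-, and its stop-loss is exactly sigma^2 + (mu - t)^2 if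
   t < mu and tends to sigma^2 if mu <= t.  In the boundary case the choice
   s = mu/sigma puts both atoms in [0, t], so the constraint holds with
   equality and the set of admissible laws is nonempty. *)

Section pos_neg_part.
Context {R : realType}.
Implicit Types y t : R.

Lemma pos_part_ge0 y : 0 <= pos_part y.
Proof. by rewrite le_max lexx orbT. Qed.

Lemma neg_part_ge0 y : 0 <= neg_part y.
Proof. by rewrite le_max lexx orbT. Qed.

Lemma pos_part_id y : 0 <= y -> pos_part y = y.
Proof. exact: max_l. Qed.

Lemma pos_part_eq0 y : y <= 0 -> pos_part y = 0.
Proof. exact: max_r. Qed.

Lemma neg_part_eq0 y : 0 <= y -> neg_part y = 0.
Proof. by move=> y0; apply: max_r; rewrite oppr_le0. Qed.

Lemma neg_part_id y : y <= 0 -> neg_part y = - y.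
Proof. by move=> y0; apply: max_l; rewrite oppr_ge0. Qed.

Lemma pos_partE y : pos_part y = y + neg_part y.
Proof.
have [y_ge0|/ltW y_le0] := leP 0 y.
  by rewrite pos_part_id// neg_part_eq0// addr0.
by rewrite pos_part_eq0// neg_part_id// subrr.
Qed.

Lemma neg_part_gt0_id y : 0 < neg_part y -> neg_part y = - y.
Proof.
case/orP: (le_total 0 y) => [y_ge0|y_le0]; last by rewrite neg_part_id.
by rewrite neg_part_eq0// ltxx.
Qed.

Lemma measurable_pos_part_sub t : measurable_fun setT (fun x : R => pos_part (x - t)).
Proof. exact/measurable_funrpos/measurable_funB. Qed.

Lemma measurable_neg_part_sub t : measurable_fun setT (fun x : R => neg_part (x - t)).
Proof. exact/measurable_funrneg/measurable_funB. Qed.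

End pos_neg_part.

Section two_point.
Context {R : realType}.
Variables (p a b : R).
Hypotheses (p_ge0 : 0 <= p) (p_le1 : p <= 1).

Let q_ge0 : 0 <= 1 - p. Proof. by rewrite subr_ge0. Qed.

Definition two_point : set R -> \bar R :=
  measure_add (mscale (NngNum p_ge0) \d_b) (mscale (NngNum q_ge0) \d_a).

HB.instance Definition _ := Measure.copy two_point
  (measure_add (mscale (NngNum p_ge0) \d_b) (mscale (NngNum q_ge0) \d_a)).

Lemma ge0_integral_two_point (g : R -> \bar R) : measurable_fun setT g ->
  (forall x, 0 <= g x)%E ->
  (\int[two_point]_x g x = p%:E * g b + (1 - p)%:E * g a)%E.
Proof.
move=> mg g0; rewrite ge0_integral_measure_add// !ge0_integral_mscale//.
by rewrite !integral_dirac// !diracT !mul1e.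
Qed.

Let two_point_setT : two_point [set: R] = 1%E.
Proof.
have := ge0_integral_two_point (fun=> 1%E) (measurable_cst _) (fun=> lee01).
by rewrite integral_cst//= mul1e => ->; rewrite !mule1 -EFinD subrKC.
Qed.

HB.instance Definition _ :=
  @Measure_isProbability.Build _ _ R two_point two_point_setT.

Lemma two_point_eq0 (A : set R) : ~ A a -> ~ A b -> two_point A = 0%E.
Proof.
move=> Aa Ab; rewrite /two_point measure_addE /= /mscale /= !diracE.
by rewrite !memNset // !mule0 adde0.
Qed.

Lemma integral_two_point (f : R -> R) : measurable_fun setT f ->
  (\int[two_point]_x (f x)%:E = (p * f b + (1 - p) * f a)%:E)%E.
Proof.
move=> mf; have mfE : measurable_fun setT (EFin \o f) by exact/measurable_EFinP.
rewrite integralE !ge0_integral_two_point//; last 2 first.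
- exact: measurable_funeneg.
- exact: measurable_funepos.
rewrite !funeposE !funenegE /= -!EFin_max -!EFinM -!EFinD; congr EFin.
have pos_subNneg (y : R) : Num.max y 0 - Num.max (- y) 0 = y.
  by rewrite -[Num.max y 0]/(pos_part y) pos_partE addrK.
by rewrite opprD addrACA -!mulrBr !pos_subNneg.
Qed.

Lemma two_point_integrable (f : R -> R) : measurable_fun setT f ->
  two_point.-integrable setT (fun x => (f x)%:E).
Proof.
move=> mf; have mfE : measurable_fun setT (EFin \o f) by exact/measurable_EFinP.
apply/integrableP; split => //.
by rewrite ge0_integral_two_point//; [exact: ltry | exact: measurableT_comp].
Qed.

End two_point.

Section moment_bounds.
Context {R : realType} {F : probability R R} {mu sigma : R}.
Hypotheses (iX : F.-integrable setT (fun x => x%:E))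
  (EX : (\int[F]_x x%:E = mu%:E)%E)
  (EX2 : (\int[F]_x (x ^+ 2)%:E = (mu ^+ 2 + sigma ^+ 2)%:E)%E).
Local Open Scope ereal_scope.

Lemma stop_loss2_ge0 t : 0 <= stop_loss2 t F.
Proof. by apply: integral_ge0 => x _; rewrite lee_fin sqr_ge0. Qed.

Lemma integral_pos_part_sub t :
  F.-integrable setT (fun x => (neg_part (x - t))%:E) ->
  \int[F]_x (pos_part (x - t))%:E = (mu - t)%:E + \int[F]_x (neg_part (x - t))%:E.
Proof.
move=> ineg; have icst c : F.-integrable setT (fun=> c%:E).
  exact: finite_measure_integrable_cst.
under eq_integral => x _ do rewrite pos_partE !EFinD.
rewrite integralD//; last exact: integrableD.
by rewrite integralD// integral_cst// [X in _ * X]probability_setT mule1 EX -EFinD.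
Qed.

Lemma stop_loss2_eq0 {t lambda} :
  \int[F]_x (neg_part (x - t))%:E <= lambda%:E -> (mu + lambda <= t)%R ->
  stop_loss2 t F = 0.
Proof.
move=> Eneg le_t.
have pos_ge0 x : 0 <= (pos_part (x - t))%:E by rewrite lee_fin pos_part_ge0.
have mpos : measurable_fun setT (fun x : R => (pos_part (x - t))%:E).
  by apply/measurable_EFinP; exact: measurable_pos_part_sub.
have ineg : F.-integrable setT (fun x => (neg_part (x - t))%:E).
  apply/integrableP; split; first by apply/measurable_EFinP; exact: measurable_neg_part_sub.
  under eq_integral => x _ do rewrite gee0_abs ?lee_fin ?neg_part_ge0//.
  exact: le_lt_trans Eneg (ltry _).
have Epos0 : \int[F]_x `|(pos_part (x - t))%:E| = 0.
  under eq_integral => x _ do rewrite gee0_abs//.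
  apply/eqP; rewrite eq_le integral_ge0// andbT integral_pos_part_sub//.
  by apply: le_trans (leeD2l _ Eneg) _; rewrite -EFinD lee_fin; lra.
have pos0 := (ae_eq_integral_abs F measurableT mpos).1 Epos0.
rewrite /stop_loss2 (ae_eq_integral (cst 0))// ?integral0//.
- by apply/measurable_EFinP; apply: measurable_funX; exact: measurable_pos_part_sub.
- by apply: filterS pos0 => x /= pos0x /pos0x [->]; rewrite expr0n.
Qed.

Let iX2 : F.-integrable setT (fun x => (x ^+ 2)%:E).
Proof.
apply/integrableP; split; first by apply/measurable_EFinP; exact: measurable_funX.
under eq_integral => x _ do rewrite gee0_abs ?lee_fin ?sqr_ge0//.
by rewrite EX2 ltry.
Qed.

Lemma integral_sqr_sub m :
  \int[F]_x ((x - m) ^+ 2)%:E = (sigma ^+ 2 + (mu - m) ^+ 2)%:E.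
Proof.
have icst c : F.-integrable setT (fun=> c%:E).
  exact: finite_measure_integrable_cst.
have iZ : F.-integrable setT (fun x => (- (2 * m))%:E * x%:E).
  exact: integrableZl.
rewrite (eq_integral (fun x : R => (x ^+ 2)%:E + (- (2 * m))%:E * x%:E + (m ^+ 2)%:E));
  last by move=> x _; rewrite -EFinM -!EFinD; congr EFin; ring.
rewrite integralD//; last exact: integrableD.
rewrite integralD// integral_cst// [X in _ * X]probability_setT mule1.
rewrite integralZl// EX EX2.
by rewrite -!EFinM -!EFinD; congr EFin; ring.
Qed.

Lemma stop_loss2_le_sub_sqr {t m} : (m <= t)%R ->
  stop_loss2 t F <= (sigma ^+ 2 + (mu - m) ^+ 2)%:E.
Proof.
move=> le_mt; rewrite -(integral_sqr_sub m) /stop_loss2; apply: ge0_le_integral => //.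
- by move=> x _; rewrite lee_fin sqr_ge0.
- by apply/measurable_EFinP; apply: measurable_funX; exact: measurable_pos_part_sub.
- by apply/measurable_EFinP; apply: measurable_funX; exact: measurable_funB.
move=> x _; rewrite lee_fin; case/orP: (le_total (x - t) 0)%R => xt.
  by rewrite pos_part_eq0 // expr0n sqr_ge0.
rewrite pos_part_id//.
have : (0 <= (t - m) * ((x - t) + (x - m)))%R by apply: mulr_ge0; lra.
nra.
Qed.

Lemma stop_loss2_le_variance t :
  stop_loss2 t F <= (sigma ^+ 2 + pos_part (mu - t) ^+ 2)%:E.
Proof.
have [le_mut|lt_tmu] := (leP mu t)%R.
  by rewrite pos_part_eq0 ?subr_le0// -(subrr mu); exact: stop_loss2_le_sub_sqr.
by rewrite pos_part_id ?subr_ge0 ?(ltW lt_tmu)//; exact: stop_loss2_le_sub_sqr.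
Qed.

End moment_bounds.

Lemma near0_mulr_le {R : realType} (k c : R) : 0 < k -> 0 < c ->
  \forall s \near 0^'+, k * s <= c.
Proof.
move=> k0 c0; near=> s; rewrite -ler_pdivlMl//.
by near: s; apply: nbhs_right_le; rewrite mulr_gt0 ?invr_gt0.
Unshelve. all: by end_near.
Qed.

Section mean_variance_two_point.
Context {R : realType}.
Variables (mu sigma s : R).

Let p := s ^+ 2 / (1 + s ^+ 2).
Let a := mu - sigma * s.
Let b := mu + sigma / s.

Let one_add_sqr_gt0 : 0 < 1 + s ^+ 2.
Proof. by rewrite ltr_pwDl ?sqr_ge0. Qed.

Let p_ge0 : 0 <= p.
Proof. exact: divr_ge0 (sqr_ge0 s) (ltW one_add_sqr_gt0). Qed.

Let p_le1 : p <= 1.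
Proof. by rewrite ler_pdivrMr// mul1r lerDr. Qed.

Definition mv_two_point : probability R R := two_point p a b p_ge0 p_le1.

Lemma integral_mv_two_point (f : R -> R) : measurable_fun setT f ->
  (\int[mv_two_point]_x (f x)%:E = (p * f b + (1 - p) * f a)%:E)%E.
Proof. exact: integral_two_point. Qed.

Lemma mv_two_point_Lset_pos t lambda : 0 < s -> 0 <= sigma -> sigma * s <= mu ->
  (\int[mv_two_point]_x (neg_part (x - t))%:E <= lambda%:E)%E ->
  Lset_pos t mu sigma lambda mv_two_point.
Proof.
move=> s0 sigma0 sigma_s_le Eneg.
have field_ok : (1 + s ^+ 2 != 0) && (s != 0) by rewrite !gt_eqF.
split; last first.
  apply: two_point_eq0; apply/negP; rewrite -leNgt.
  - by rewrite subr_ge0.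
  - have mu_ge0 : 0 <= mu := le_trans (mulr_ge0 sigma0 (ltW s0)) sigma_s_le.
    exact: addr_ge0 mu_ge0 (divr_ge0 sigma0 (ltW s0)).
split; first exact: two_point_integrable.
split.
  rewrite (integral_mv_two_point id); last exact: measurable_id.
  by congr EFin; rewrite /p /a /b /=; field.
split=> //.
rewrite (integral_mv_two_point (fun x => x ^+ 2)); last exact: measurable_funX.
by congr EFin; rewrite /p /a /b; field.
Qed.

End mean_variance_two_point.

Lemma sqr_sub_div_ge {R : realFieldType} (sigma k e s : R) :
  0 < s <= 1 -> 0 <= e -> s * (sigma ^+ 2 + 2 * sigma * k) <= e ->
  sigma ^+ 2 - e <= (sigma - s * k) ^+ 2 / (1 + s ^+ 2).
Proof.
case/andP=> s_gt0 s_le1 e_ge0 le_e.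
have sqr1_gt0 : 0 < 1 + s ^+ 2 by rewrite ltr_pwDl ?sqr_ge0.
rewrite ler_pdivlMr//.
have : sigma ^+ 2 * s ^+ 2 <= sigma ^+ 2 * s.
  by rewrite ler_wpM2l ?sqr_ge0// expr2 ger_pMr.
have : 0 <= s ^+ 2 * k ^+ 2 by rewrite mulr_ge0 ?sqr_ge0.
have : 0 <= e * s ^+ 2 by rewrite mulr_ge0 ?sqr_ge0.
nra.
Qed.

Section two_point_witnesses.
Context {R : realType} {t mu sigma : R}.
Hypotheses (mu_gt0 : 0 < mu) (sigma_gt0 : 0 < sigma).

Lemma Lset_pos_attains_above {lambda} : 0 < lambda -> t < mu ->
  exists2 F, Lset_pos t mu sigma lambda F &
    stop_loss2 t F = (sigma ^+ 2 + (mu - t) ^+ 2)%:E.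
Proof.
move=> lambda_gt0 t_lt_mu.
near (0 : R)^'+ => s.
have s_gt0 : 0 < s by near: s; exact: nbhs_right_gt.
have sigma_s_le_mu : sigma * s <= mu by near: s; exact: near0_mulr_le.
have t_le_a : t <= mu - sigma * s.
  suff : sigma * s <= mu - t by lra.
  by near: s; apply: near0_mulr_le; rewrite ?subr_gt0.
have t_le_b : t <= mu + sigma / s.
  have : 0 < sigma / s by rewrite divr_gt0.
  lra.
have field_ok : (1 + s ^+ 2 != 0) && (s != 0) by rewrite !gt_eqF ?ltr_pwDl ?sqr_ge0.
exists (mv_two_point mu sigma s).
  apply: mv_two_point_Lset_pos => //; first exact: ltW.
  rewrite integral_mv_two_point; last exact: measurable_neg_part_sub.
  by rewrite !neg_part_eq0 ?subr_ge0// !mulr0 addr0 lee_fin; exact: ltW.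
rewrite /stop_loss2 integral_mv_two_point; last first.
  by apply: measurable_funX; exact: measurable_pos_part_sub.
by rewrite !pos_part_id ?subr_ge0//; congr EFin; field.
Unshelve. all: by end_near.
Qed.

Lemma Lset_pos_approx_below {lambda e} : mu <= t -> t - mu < lambda -> 0 < e ->
  exists2 F, Lset_pos t mu sigma lambda F & ((sigma ^+ 2 - e)%:E <= stop_loss2 t F)%E.
Proof.
move=> le_mut lt_lambda e_gt0; set k := t - mu.
have k_ge0 : 0 <= k by rewrite subr_ge0.
near (0 : R)^'+ => s.
have s_gt0 : 0 < s by near: s; exact: nbhs_right_gt.
have s_le1 : s <= 1 by near: s; exact/nbhs_right_le/ltr01.
have sigma_s_le_mu : sigma * s <= mu by near: s; exact: near0_mulr_le.
have sigma_s_le : sigma * s <= lambda - k.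
  by near: s; apply: near0_mulr_le; rewrite ?subr_gt0.
have k_s_le : (1 + k) * s <= sigma.
  by near: s; apply: near0_mulr_le; rewrite ?ltr_pwDl.
have s_le_e : (sigma ^+ 2 + 2 * sigma * k) * s <= e.
  near: s; apply: near0_mulr_le => //.
  have := mulr_ge0 (ltW sigma_gt0) k_ge0.
  have : 0 < sigma ^+ 2 by rewrite exprn_gt0.
  lra.
have a_le_t : mu - sigma * s <= t.
  by have := mulr_ge0 (ltW sigma_gt0) (ltW s_gt0); lra.
have t_le_b : t <= mu + sigma / s.
  rewrite -lerBlDl -/k ler_pdivlMr//.
  by apply: le_trans k_s_le; rewrite ler_pM2r//; lra.
have field_ok : (1 + s ^+ 2 != 0) && (s != 0) by rewrite !gt_eqF ?ltr_pwDl ?sqr_ge0.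
exists (mv_two_point mu sigma s).
  apply: mv_two_point_Lset_pos => //; first exact: ltW.
  rewrite integral_mv_two_point; last exact: measurable_neg_part_sub.
  rewrite neg_part_eq0 ?subr_ge0// neg_part_id ?subr_le0// mulr0 add0r lee_fin.
  have : 0 <= s ^+ 2 / (1 + s ^+ 2) by rewrite divr_ge0 ?addr_ge0 ?sqr_ge0.
  have : 0 <= - (mu - sigma * s - t) by rewrite oppr_ge0 subr_le0.
  rewrite /k in sigma_s_le; nra.
rewrite /stop_loss2 integral_mv_two_point; last first.
  by apply: measurable_funX; exact: measurable_pos_part_sub.
rewrite pos_part_id ?subr_ge0// pos_part_eq0 ?subr_le0// expr0n mulr0n mulr0 addr0 lee_fin.
have -> : s ^+ 2 / (1 + s ^+ 2) * (mu + sigma / s - t) ^+ 2 =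
    (sigma - s * k) ^+ 2 / (1 + s ^+ 2) by rewrite /k; field.
by apply: sqr_sub_div_ge; rewrite ?s_gt0 ?s_le1 ?(ltW e_gt0)// mulrC.
Unshelve. all: by end_near.
Qed.

Lemma mv_two_point_tight_Lset_pos : sigma ^+ 2 <= mu * (t - mu) ->
  Lset_pos t mu sigma (t - mu) (mv_two_point mu sigma (mu / sigma)).
Proof.
move=> var_le; set s := mu / sigma.
have s_gt0 : 0 < s by rewrite divr_gt0.
have sigma_s : sigma * s = mu by rewrite /s mulrC divfK ?gt_eqF.
have b_le_t : mu + sigma / s <= t.
  have -> : sigma / s = sigma ^+ 2 / mu by rewrite /s; field; rewrite !gt_eqF.
  by rewrite -lerBrDl ler_pdivrMr// mulrC.
have t_ge0 : 0 <= t.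
  exact: le_trans (addr_ge0 (ltW mu_gt0) (ltW (divr_gt0 sigma_gt0 s_gt0))) b_le_t.
have field_ok : (1 + s ^+ 2 != 0) && (s != 0) by rewrite !gt_eqF ?ltr_pwDl ?sqr_ge0.
apply: mv_two_point_Lset_pos => //; [exact: ltW | by rewrite sigma_s |].
rewrite integral_mv_two_point; last exact: measurable_neg_part_sub.
rewrite !neg_part_id ?sigma_s ?subr_le0 ?subrr// lee_fin le_eqVlt.
by apply/orP; left; apply/eqP; rewrite -sigma_s; field.
Qed.

End two_point_witnesses.

Section ereal_sup_bounds.
Context {R : realType}.
Local Open Scope ereal_scope.

Lemma ereal_sup_sandwich (A B : set \bar R) (v : \bar R) :
  A `<=` B -> ubound B v -> v <= ereal_sup A ->
  ereal_sup A = v /\ ereal_sup B = v.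
Proof.
move=> AB Bv vA; have supB : ereal_sup B <= v by exact: ge_ereal_sup.
have supA := le_trans (ereal_sup_le AB) supB.
split; apply/le_anti; rewrite ?supA ?supB ?vA//.
exact: le_trans vA (ereal_sup_le AB).
Qed.

Lemma ereal_sup_stop_loss2_ge0 t (P : set (probability R R)) F :
  P F -> 0 <= ereal_sup [set stop_loss2 t F | F in P].
Proof.
by move=> PF; apply: le_ereal_sup_tmp; exists (stop_loss2 t F);
  [exists F | exact: stop_loss2_ge0].
Qed.

End ereal_sup_bounds.

Lemma variance_le_sup_Lset_pos {R : realType} (t mu sigma lambda : R) :
  0 < mu -> 0 < sigma -> 0 < lambda -> neg_part (mu - t) < lambda ->
  ((sigma ^+ 2 + pos_part (mu - t) ^+ 2)%:E <=
   ereal_sup [set stop_loss2 t F | F in Lset_pos t mu sigma lambda])%E.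
Proof.
move=> mu_gt0 sigma_gt0 lambda_gt0 lt_lambda.
have [t_lt_mu|le_mut] := ltP t mu.
  have [F LF F_val] := Lset_pos_attains_above mu_gt0 sigma_gt0 lambda_gt0 t_lt_mu.
  rewrite pos_part_id; last by rewrite subr_ge0 ltW.
  by apply: le_ereal_sup_tmp; exists (stop_loss2 t F); rewrite ?F_val//; exists F.
rewrite pos_part_eq0 ?subr_le0// expr0n mulr0n addr0.
rewrite neg_part_id ?subr_le0// opprB in lt_lambda.
apply/lee_addgt0Pr => e e_gt0.
have [F LF le_F] := Lset_pos_approx_below mu_gt0 sigma_gt0 le_mut lt_lambda e_gt0.
apply: (@le_trans _ _ (stop_loss2 t F + e%:E)%E).
  by rewrite -leeBlDr// -EFinB.
by apply: leeD2r; apply: le_ereal_sup_tmp; exists (stop_loss2 t F) => //; exists F.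
Qed.

Theorem corollary1 (R : realType) (t mu sigma lambda : R) :
  0 < mu -> 0 < sigma -> 0 < lambda -> neg_part (mu - t) <= lambda ->
  (neg_part (mu - t) < lambda \/
     (lambda = neg_part (mu - t) /\ sigma ^+ 2 <= mu * (t - mu))) ->
  let V : R := if neg_part (mu - t) < lambda
               then sigma ^+ 2 + pos_part (mu - t) ^+ 2 else 0 in
  ereal_sup [set stop_loss2 t F | F in Lset_pos t mu sigma lambda] = V%:E /\
  ereal_sup [set stop_loss2 t F | F in Lset t mu sigma lambda] = V%:E.
Proof.
move=> mu_gt0 sigma_gt0 lambda_gt0 _ cases V.
have Lset_pos_sub : [set stop_loss2 t F | F in Lset_pos t mu sigma lambda] `<=`
    [set stop_loss2 t F | F in Lset t mu sigma lambda].
  by move=> _ [F [LF _] <-]; exists F.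
rewrite /V; case: ifPn => [lt_lambda|not_lt].
  apply: ereal_sup_sandwich Lset_pos_sub _ _; last exact: variance_le_sup_Lset_pos.
  by move=> _ [F [iX [EX [EX2 _]]] <-]; exact: stop_loss2_le_variance iX EX EX2 t.
have [lambda_eq var_le] : lambda = neg_part (mu - t) /\ sigma ^+ 2 <= mu * (t - mu).
  by case: cases => // lt_lambda; rewrite lt_lambda in not_lt.
have lambda_tight : lambda = t - mu.
  by rewrite lambda_eq neg_part_gt0_id ?opprB// -lambda_eq.
apply: ereal_sup_sandwich Lset_pos_sub _ _.
  move=> _ [F [iX [EX [_ Eneg]]] <-].
  by rewrite (stop_loss2_eq0 iX EX Eneg)// lambda_tight addrC subrK.
rewrite lambda_tight; apply: ereal_sup_stop_loss2_ge0.
exact: mv_two_point_tight_Lset_pos.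
Qed.
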